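(* Let $\mathcal X$ and $\mathcal U$ be finite nonempty sets, $f:\mathcal X\times\mathcal U\to\mathcal X$, and $\ell,g:\mathcal X\to\mathbb R$. Define, for $x\in\mathcal X$, $$V_{\mathrm A}^*(x)=\max_{\pi\in\Pi}\min_{\tau\in\mathbb N} g(\xi_x^\pi(\tau)),\qquad \tilde\ell(x)=\min\{\ell(x),V_{\mathrm A}^*(x)\},$$ $$\tilde V_{\mathrm{RA}}^*(x)=\max_{\pi\in\Pi}\max_{\tau\in\mathbb N}\min\Big\{\tilde\ell(\xi_x^\pi(\tau)),\ \min_{\kappa\le\tau} g(\xi_x^\pi(\kappa))\Big\}.$$ Then for every $x\in\mathcal X$, $$\max_{\bar\pi\in\overline\Pi}\min\Big\{\max_{\tau\in\mathbb N}\ell(\bar\xi_x^{\bar\pi}(\tau)),\ \min_{\tau\in\mathbb N} g(\bar\xi_x^{\bar\pi}(\tau))\Big\}=\max_{\mathbf u\in\mathbb U}\min\Big\{\max_{\tau\in\mathbb N}\ell(\xi_x^{\mathbf u}(\tau)),\ \min_{\kappa\in\mathbb N} g(\xi_x^{\mathbf u}(\kappa))\Big\}=\tilde V_{\mathrm{RA}}^*(x).$$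
   Context: $\mathbb N=\{0,1,2,\dots\}$. $\Pi$ is the set of maps $\pi:\mathcal X\to\mathcal U$ and $\mathbb U$ the set of action sequences $\mathbf u:\mathbb N\to\mathcal U$. For $x\in\mathcal X$ and $\pi\in\Pi$, $\xi_x^\pi:\mathbb N\to\mathcal X$ is given by $\xi_x^\pi(0)=x$, $\xi_x^\pi(t+1)=f(\xi_x^\pi(t),\pi(\xi_x^\pi(t)))$; for $\mathbf u\in\mathbb U$, $\xi_x^{\mathbf u}(0)=x$, $\xi_x^{\mathbf u}(t+1)=f(\xi_x^{\mathbf u}(t),\mathbf u(t))$. Let $\mathcal Y=\{\ell(x):x\in\mathcal X\}$, $\mathcal Z=\{g(x):x\in\mathcal X\}$, and let $\overline\Pi$ be the set of augmented policies $\bar\pi:\mathcal X\times\mathcal Y\times\mathcal Z\to\mathcal U$. For $\bar\pi\in\overline\Pi$ and $x\in\mathcal X$, the augmented trajectory $(\bar\xi_x^{\bar\pi},\bar y_x^{\bar\pi},\bar z_x^{\bar\pi})$ is defined by $\bar\xi_x^{\bar\pi}(0)=x$, $\bar y_x^{\bar\pi}(0)=\ell(x)$, $\bar z_x^{\bar\pi}(0)=g(x)$ and $\bar\xi_x^{\bar\pi}(t+1)=f\big(\bar\xi_x^{\bar\pi}(t),\bar\pi(\bar\xi_x^{\bar\pi}(t),\bar y_x^{\bar\pi}(t),\bar z_x^{\bar\pi}(t))\big)$, $\bar y_x^{\bar\pi}(t+1)=\max\{\ell(\bar\xi_x^{\bar\pi}(t+1)),\bar y_x^{\bar\pi}(t)\}$,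 $\bar z_x^{\bar\pi}(t+1)=\min\{g(\bar\xi_x^{\bar\pi}(t+1)),\bar z_x^{\bar\pi}(t)\}$. *)

From mathcomp Require Import all_boot all_order all_algebra.
From mathcomp Require Import all_classical all_reals.
Set Implicit Arguments. Unset Strict Implicit. Unset Printing Implicit Defensive.
Import Order.TTheory GRing.Theory Num.Theory.
Local Open Scope ring_scope.
Local Open Scope classical_set_scope.

Section Defs.
Variables (R : realType) (X U : finType).
Variable f : X -> U -> X.
Variables (l g : X -> R).

Fixpoint traj_pi (pi : X -> U) (x : X) (t : nat) : X :=
  match t with 0 => x | t'.+1 => let s := traj_pi pi x t' in f s (pi s) end.

Fixpoint traj_u (u : nat -> U) (x : X) (t : nat) : X :=
  match t with 0 => x | t'.+1 => let s := traj_u u x t' in f s (u t') end.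

Definition Yset := {y : R | exists x : X, l x = y}.
Definition Zset := {z : R | exists x : X, g x = z}.

Lemma max_in_range (h : X -> R) (a b : R) :
  (exists x, h x = a) -> (exists x, h x = b) -> exists x, h x = Num.max a b.
Proof.
move=> [xa ha] [xb hb]; rewrite /Num.max; case: ifP => _.
  by exists xb. by exists xa.
Qed.

Lemma min_in_range (h : X -> R) (a b : R) :
  (exists x, h x = a) -> (exists x, h x = b) -> exists x, h x = Num.min a b.
Proof.
move=> [xa ha] [xb hb]; rewrite /Num.min; case: ifP => _.
  by exists xa. by exists xb.
Qed.

Definition aug_policy := X -> Yset -> Zset -> U.

Definition aug_init (x : X) : X * Yset * Zset :=
  (x, exist _ (l x) (ex_intro _ x erefl), exist _ (g x) (ex_intro _ x erefl)).

Definition aug_step (bpi : aug_policy) (s : X * Yset * Zset) : X * Yset * Zset :=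
  let: (xi, y, z) := s in
  let x' := f xi (bpi xi y z) in
  (x',
   exist _ (Num.max (l x') (sval y))
     (max_in_range (ex_intro _ x' erefl) (svalP y)),
   exist _ (Num.min (g x') (sval z))
     (min_in_range (ex_intro _ x' erefl) (svalP z))).

Fixpoint aug_traj (bpi : aug_policy) (x : X) (t : nat) : X * Yset * Zset :=
  match t with 0 => aug_init x | t'.+1 => aug_step bpi (aug_traj bpi x t') end.

Definition aug_xi (bpi : aug_policy) (x : X) (t : nat) : X := (aug_traj bpi x t).1.1.

(* "max"/"min" over (possibly infinite) index sets, as the library sup/inf;
   all these sets take finitely many values, so sup/inf are attained. *)

Definition VA (x : X) : R :=
  sup (range (fun pi : X -> U => inf (range (fun t : nat => g (traj_pi pi x t))))).

Definition ltilde (x : X) : R := Num.min (l x) (VA x).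

Definition VRA_tilde (x : X) : R :=
  sup (range (fun pi : X -> U =>
    sup (range (fun tau : nat =>
      Num.min (ltilde (traj_pi pi x tau))
              (inf [set g (traj_pi pi x k) | k in [set k : nat | (k <= tau)%N]]))))).

Definition V_aug (x : X) : R :=
  sup (range (fun bpi : aug_policy =>
    Num.min (sup (range (fun t : nat => l (aug_xi bpi x t))))
            (inf (range (fun t : nat => g (aug_xi bpi x t)))))).

Definition V_openloop (x : X) : R :=
  sup (range (fun u : nat -> U =>
    Num.min (sup (range (fun t : nat => l (traj_u u x t))))
            (inf (range (fun k : nat => g (traj_u u x k)))))).

End Defs.

From mathcomp Require Import all_boot all_order all_algebra.
From mathcomp Require Import finmap all_classical all_reals.
Set Implicit Arguments. Unset Strict Implicit. Unset Printing Implicit Defensive.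
Import Order.TTheory GRing.Theory Num.Theory.
Local Open Scope ring_scope.
Local Open Scope classical_set_scope.

(* All the quantities involved take their values among those of l and g, a
   finite set, so every supremum and infimum is attained and each value
   function is determined by its superlevel sets.  For every threshold c, the
   three values at x are >= c exactly when some input sequence drives x into
   {l >= c} while keeping g >= c along the whole trajectory.  Such an input
   yields two state feedbacks: one keeping the state where g >= c can be
   maintained forever, and one strictly decreasing the least reach-avoid time.
   Following the second until {l >= c} is hit and the first afterwards is an
   augmented policy, since the running maximum of l records whether the target
   has been hit; the same two feedbacks give the closed-loop witness for
   VRA_tilde, where V_A certifies the safe continuation. *)

Section FiniteExtrema.
Variable R : realType.

Lemma le_ext (a b : R) : (forall c, c <= a <-> c <= b) -> a = b.
Proof.
by move=> ab; apply/le_anti/andP; split; [apply/ab | apply/ab].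
Qed.

Lemma min_in (A : set R) (a b : R) : A a -> A b -> A (Num.min a b).
Proof. by rewrite /Num.min; case: ifP. Qed.

Lemma finite_sup_max (A : set R) :
  finite_set A -> A !=set0 -> A (sup A) /\ ubound A (sup A).
Proof.
move=> /finite_fsetP[F ->] [a Fa].
case: (@arg_maxP _ _ _ (FSetSub Fa) predT val isT) => m _ m_max.
have ubm : ubound [set` F] (val m) by move=> b Fb; exact: (m_max (FSetSub Fb)).
suff -> : sup [set` F] = val m by split => //; exact: fsvalP.
apply/le_anti; rewrite ge_sup //=; last by exists a.
by apply: ub_le_sup; [exists (val m) | exact: fsvalP].
Qed.

Lemma finite_inf_min (A : set R) :
  finite_set A -> A !=set0 -> A (inf A) /\ lbound A (inf A).
Proof.
move=> finA [a Aa].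
have NA0 : -%R @` A !=set0 by exists (- a), a.
have [] := finite_sup_max (finite_image -%R finA) NA0.
rewrite /inf => -[b Ab <-] ub; rewrite opprK; split => // b' Ab'.
by rewrite -lerN2; apply: ub; exists b'.
Qed.

Section FiniteValued.
Variables (T : Type) (V : set R) (F : T -> R) (I : set T).
Hypotheses (finV : finite_set V) (FV : forall t, V (F t)) (I0 : I !=set0).

Let finFI : finite_set (F @` I).
Proof. by apply: sub_finite_set finV => _ [t _ <-]. Qed.

Let FI0 : F @` I !=set0.
Proof. by case: I0 => t It; exists (F t), t. Qed.

Lemma sup_image_in : V (sup (F @` I)).
Proof. by have [[t _ <-] _] := finite_sup_max finFI FI0. Qed.

Lemma inf_image_in : V (inf (F @` I)).
Proof. by have [[t _ <-] _] := finite_inf_min finFI FI0. Qed.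

Lemma le_sup_image c : c <= sup (F @` I) <-> exists2 t, I t & c <= F t.
Proof.
have [[t It <-] ub] := finite_sup_max finFI FI0.
split=> [le|[t' It' le]]; first by exists t.
by apply: le_trans le (ub _ _); exists t'.
Qed.

Lemma le_inf_image c : c <= inf (F @` I) <-> forall t, I t -> c <= F t.
Proof.
have [[t It <-] lb] := finite_inf_min finFI FI0.
split=> [le t' It'|le]; last exact: le.
by apply: le_trans le (lb _ _); exists t'.
Qed.

End FiniteValued.
End FiniteExtrema.

Section Trajectories.
Variables (X U : finType) (f : X -> U -> X).

Lemma traj_uD (u : nat -> U) y s t :
  traj_u f u y (s + t)%N = traj_u f (fun i => u (s + i)%N) (traj_u f u y s) t.
Proof. by elim: t => [|t IH]; rewrite ?addn0 // addnS /= IH. Qed.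

Lemma eq_traj_u (u v : nat -> U) y n :
  (forall k, (k < n)%N -> u k = v k) ->
  forall k, (k <= n)%N -> traj_u f u y k = traj_u f v y k.
Proof. by move=> uv; elim=> [//|k IH] lt_kn /=; rewrite IH ?uv // ltnW. Qed.

Lemma traj_pi_open_loop (pi : X -> U) y :
  traj_pi f pi y =1 traj_u f (fun t => pi (traj_pi f pi y t)) y.
Proof. by elim=> [//|t /= <-]. Qed.

Lemma traj_piS (pi : X -> U) y t :
  traj_pi f pi y t.+1 = traj_pi f pi (f y (pi y)) t.
Proof. by elim: t => [//|t /= ->]. Qed.

Definition cat_input (n : nat) (u v : nat -> U) (k : nat) : U :=
  if (k < n)%N then u k else v (k - n)%N.

Lemma traj_u_cat_le n u v y k :
  (k <= n)%N -> traj_u f (cat_input n u v) y k = traj_u f u y k.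
Proof. by apply: eq_traj_u => i lt_in; rewrite /cat_input lt_in. Qed.

Lemma traj_u_catD n u v y j :
  traj_u f (cat_input n u v) y (n + j)%N = traj_u f v (traj_u f u y n) j.
Proof.
rewrite traj_uD traj_u_cat_le //; congr traj_u.
by apply/funext => i; rewrite /cat_input ltnNge leq_addr addKn.
Qed.

End Trajectories.

Section ReachAvoid.
Variables (R : realType) (X U : finType) (f : X -> U -> X) (l g : X -> R).
Variables (c : R) (u0 : U).

Definition safe (y : X) :=
  exists u : nat -> U, forall k, c <= g (traj_u f u y k).

Definition reach_avoid_at (n : nat) (y : X) :=
  exists u : nat -> U, c <= l (traj_u f u y n) /\ forall k, c <= g (traj_u f u y k).

Definition reach_avoid (y : X) := exists n, reach_avoid_at n y.

Lemma safe_le_g y : safe y -> c <= g y.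
Proof. by case=> u /(_ 0%N). Qed.

Lemma reach_avoid_safe y : reach_avoid y -> safe y.
Proof. by case=> n [u [_ ug]]; exists u. Qed.

Lemma safe_next y (u : nat -> U) :
  (forall k, c <= g (traj_u f u y k)) -> safe (f y (u 0%N)).
Proof.
by move=> ug; exists (fun i => u (1 + i)%N) => k; rewrite -(traj_uD _ _ _ 1).
Qed.

Lemma reach_avoid_atS n y (u : nat -> U) :
  c <= l (traj_u f u y n.+1) -> (forall k, c <= g (traj_u f u y k)) ->
  reach_avoid_at n (f y (u 0%N)).
Proof.
move=> ul ug; exists (fun i => u (1 + i)%N).
by rewrite -(traj_uD _ _ _ 1); split=> // k; rewrite -(traj_uD _ _ _ 1).
Qed.

Lemma safe_policy :
  exists pi : X -> U, forall y, safe y -> safe (f y (pi y)).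
Proof.
have next y : exists a, safe y -> safe (f y a).
  case: (pselect (safe y)) => [[u ug]|unsafe]; last by exists u0 => /unsafe.
  by exists (u 0%N) => _; exact: safe_next.
by have [pi piP] := choice next; exists pi.
Qed.

Lemma safe_traj_pi (pi : X -> U) :
  (forall y, safe y -> safe (f y (pi y))) ->
  forall y, safe y -> forall k, safe (traj_pi f pi y k).
Proof. by move=> piP y sy; elim=> [//|k IH] /=; apply: piP. Qed.

Lemma reach_avoid_time :
  exists d : X -> nat, forall y, reach_avoid y ->
    reach_avoid_at (d y) y /\ forall n, reach_avoid_at n y -> (d y <= n)%N.
Proof.
have least y : exists m, reach_avoid y ->
    reach_avoid_at m y /\ forall n, reach_avoid_at n y -> (m <= n)%N.
  case: (pselect (reach_avoid y)) => [[n ra]|nra]; last by exists 0%N => /nra.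
  have ex : exists n, `[< reach_avoid_at n y >] by exists n; apply/asboolP.
  case: (ex_minnP ex) => m /asboolP ram m_min; exists m => _; split=> // k rak.
  by apply: m_min; apply/asboolP.
by have [d dP] := choice least; exists d.
Qed.

Lemma reach_policy :
  exists (pi : X -> U) (d : X -> nat), forall y, reach_avoid y -> l y < c ->
    reach_avoid (f y (pi y)) /\ (d (f y (pi y)) < d y)%N.
Proof.
have [d dP] := reach_avoid_time.
have next y : exists a, reach_avoid y -> l y < c ->
    reach_avoid (f y a) /\ (d (f y a) < d y)%N.
  case: (pselect (reach_avoid y)) => [ray|nra]; last by exists u0 => /nra.
  have [[u [ul ug]] _] := dP y ray.
  case: (d y) ul => [|n] ul.
    by exists u0 => _; rewrite ltNge ul.
  have ra' := reach_avoid_atS ul ug.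
  exists (u 0%N) => _ _; split; first by exists n.
  by have [_ /(_ _ ra')] := dP _ (ex_intro _ n ra').
have [pi piP] := choice next; exists pi, d => y; exact: piP.
Qed.

Lemma reach_policy_reaches (pi : X -> U) (d : X -> nat) :
  (forall y, reach_avoid y -> l y < c ->
     reach_avoid (f y (pi y)) /\ (d (f y (pi y)) < d y)%N) ->
  forall y, reach_avoid y -> exists tau, c <= l (traj_pi f pi y tau) /\
    forall k, (k <= tau)%N -> reach_avoid (traj_pi f pi y k).
Proof.
move=> piP y; move: {2}(d y) (leqnn (d y)) => n; elim: n y => [|n IH] y le_dy ray.
all: case: (leP c (l y)) => [ly|/(piP _ ray)[ray' lt_d]].
all: try by exists 0%N; split=> // k; rewrite leqn0 => /eqP ->.
  by move: (leq_trans lt_d le_dy).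
have [|tau [ltau reach]] := IH _ _ ray'; first by rewrite -ltnS (leq_trans lt_d).
exists tau.+1; rewrite traj_piS; split=> // -[|k] lek //.
by rewrite traj_piS; exact: reach.
Qed.

Lemma reach_avoid_cat (pi : X -> U) x tau :
  c <= l (traj_pi f pi x tau) -> safe (traj_pi f pi x tau) ->
  (forall k, (k <= tau)%N -> c <= g (traj_pi f pi x k)) -> reach_avoid x.
Proof.
move=> lc [v vg] gc; set u := fun t => pi (traj_pi f pi x t).
have piu := traj_pi_open_loop f pi x.
exists tau, (cat_input tau u v); rewrite traj_u_cat_le // -piu; split=> // k.
case: (leqP k tau) => [le_kt|/ltnW/subnKC <-]; last by rewrite traj_u_catD -piu.
by rewrite traj_u_cat_le // -piu; exact: gc.
Qed.

End ReachAvoid.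

Section Augmented.
Variables (R : realType) (X U : finType) (f : X -> U -> X) (l g : X -> R).
Implicit Types (bpi : aug_policy U l g) (x : X).

Definition aug_y bpi x t : R := sval (aug_traj f bpi x t).1.2.

Definition aug_input bpi x t : U :=
  bpi (aug_xi f bpi x t) (aug_traj f bpi x t).1.2 (aug_traj f bpi x t).2.

Lemma aug_xiS bpi x t :
  aug_xi f bpi x t.+1 = f (aug_xi f bpi x t) (aug_input bpi x t).
Proof. by rewrite /aug_input /aug_xi /=; case: (aug_traj f bpi x t) => [[]]. Qed.

Lemma aug_yS bpi x t :
  aug_y bpi x t.+1 = Num.max (l (aug_xi f bpi x t.+1)) (aug_y bpi x t).
Proof. by rewrite /aug_xi /aug_y /=; case: (aug_traj f bpi x t) => [[]]. Qed.

Lemma aug_xi_open_loop bpi x : aug_xi f bpi x =1 traj_u f (aug_input bpi x) x.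
Proof. by elim=> [//|t IH]; rewrite aug_xiS /= IH. Qed.

End Augmented.

Section Switching.
Variables (R : realType) (X U : finType) (f : X -> U -> X) (l g : X -> R).
Variables (c : R) (pis pir : X -> U) (d : X -> nat) (x : X).
Hypothesis pisP : forall y, safe f g c y -> safe f g c (f y (pis y)).
Hypothesis pirP : forall y, reach_avoid f l g c y -> l y < c ->
  reach_avoid f l g c (f y (pir y)) /\ (d (f y (pir y)) < d y)%N.
Hypothesis rax : reach_avoid f l g c x.

Definition switch_policy : aug_policy U l g :=
  fun y ymax _ => if c <= sval ymax then pis y else pir y.

Let xi := aug_xi f switch_policy x.
Let Y := aug_y f switch_policy x.

Let xiS t : xi t.+1 = f (xi t) (if c <= Y t then pis (xi t) else pir (xi t)).
Proof. exact: aug_xiS. Qed.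

Let YS t : Y t.+1 = Num.max (l (xi t.+1)) (Y t).
Proof. exact: aug_yS. Qed.

Let l_le_Y t : l (xi t) <= Y t.
Proof. by case: t => [|t]; [exact: lexx | rewrite YS le_max lexx]. Qed.

Lemma switch_invariant t :
  safe f g c (xi t) /\ (Y t < c -> reach_avoid f l g c (xi t)).
Proof.
elim: t => [|t [safe_t reach_t]].
  by split=> [|_]; [exact: reach_avoid_safe rax | exact: rax].
rewrite xiS; case: (leP c (Y t)) => [cY|Yc].
  by split; [exact: pisP | rewrite YS gt_max (ltNge (Y t)) cY andbF].
have [ra' _] := pirP (reach_t Yc) (le_lt_trans (l_le_Y t) Yc).
by split=> [|_]; [exact: reach_avoid_safe ra' | exact: ra'].
Qed.

Lemma switch_follows_reach_policy :
  (forall t, Y t < c) -> forall t, xi t = traj_pi f pir x t.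
Proof. by move=> Yc; elim=> [//|t IH]; rewrite xiS leNgt Yc /= IH. Qed.

Lemma switch_reach_avoid :
  (exists n, c <= l (xi n)) /\ forall k, c <= g (xi k).
Proof.
split=> [|k]; last by have [sk _] := switch_invariant k; exact: safe_le_g sk.
apply: contrapT => never.
have lc n : l (xi n) < c by rewrite ltNge; apply/negP => cl; apply: never; exists n.
have Yc t : Y t < c.
  by elim: t => [|t IH]; [exact: (lc 0%N) | rewrite YS gt_max lc IH].
have [tau [ltau _]] := reach_policy_reaches pirP rax.
by move: (lc tau); rewrite switch_follows_reach_policy // ltNge ltau.
Qed.

End Switching.

Section Values.
Variables (R : realType) (X U : finType) (f : X -> U -> X) (l g : X -> R).
Variable u0 : U.

Let vals := range l `|` range g.

Let finite_vals : finite_set vals.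
Proof. by rewrite finite_setU; split; apply: finite_image finite_finset. Qed.

Let policies0 : [set: X -> U] !=set0.
Proof. by exists (fun=> u0). Qed.

Let inputs0 : [set: nat -> U] !=set0.
Proof. by exists (fun=> u0). Qed.

Let aug_policies0 : [set: aug_policy U l g] !=set0.
Proof. by exists (fun _ _ _ => u0). Qed.

Let times0 : [set: nat] !=set0.
Proof. by exists 0%N. Qed.

Definition ra_value (s : nat -> X) : R :=
  Num.min (sup (range (fun t => l (s t)))) (inf (range (fun t => g (s t)))).

Lemma ra_value_in s : vals (ra_value s).
Proof.
apply: min_in.
  by apply: (sup_image_in finite_vals _ times0) => t; left; exists (s t).
by apply: (inf_image_in finite_vals _ times0) => t; right; exists (s t).
Qed.

Lemma le_ra_value c s :
  c <= ra_value s <-> (exists n, c <= l (s n)) /\ forall k, c <= g (s k).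
Proof.
have lv t : vals (l (s t)) by left; exists (s t).
have gv t : vals (g (s t)) by right; exists (s t).
rewrite /ra_value le_min; split.
  move=> /andP[/(le_sup_image finite_vals lv times0)[n _ ln]].
  move=> /(le_inf_image finite_vals gv times0) gk.
  by split=> [|k]; [exists n | exact: gk].
move=> [[n ln] gk]; apply/andP; split.
  by apply/(le_sup_image finite_vals lv times0); exists n.
by apply/(le_inf_image finite_vals gv times0).
Qed.

Lemma le_V_openloop c x : c <= V_openloop f l g x <-> reach_avoid f l g c x.
Proof.
rewrite -[V_openloop f l g x]/(sup (range (fun u => ra_value (traj_u f u x)))).
rewrite (le_sup_image finite_vals (fun u => ra_value_in _) inputs0); split.
  by move=> [u _ /le_ra_value[[n ln] gk]]; exists n, u.
by move=> [n [u [ln gk]]]; exists u => //; apply/le_ra_value; split=> //; exists n.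
Qed.

Lemma VA_in y : vals (VA f g y).
Proof.
apply: (sup_image_in finite_vals _ policies0) => pi.
by apply: (inf_image_in finite_vals _ times0) => t; right; exists (traj_pi f pi y t).
Qed.

Lemma le_VA c y : c <= VA f g y <-> safe f g c y.
Proof.
have gv pi t : vals (g (traj_pi f pi y t)) by right; exists (traj_pi f pi y t).
have infv pi : vals (inf (range (fun t => g (traj_pi f pi y t)))).
  exact: (inf_image_in finite_vals (gv pi) times0).
rewrite /VA (le_sup_image finite_vals infv policies0); split.
  move=> [pi _ /(le_inf_image finite_vals (gv pi) times0) gk].
  exists (fun t => pi (traj_pi f pi y t)) => k.
  by rewrite -traj_pi_open_loop; exact: gk.
move=> sy; have [pi piP] := safe_policy f g c u0.
exists pi => //; apply/(le_inf_image finite_vals (gv pi) times0) => k _.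
exact/safe_le_g/(safe_traj_pi piP).
Qed.

Lemma le_VRA_tilde c x : c <= VRA_tilde f l g x <-> reach_avoid f l g c x.
Proof.
pose y pi tau := traj_pi f pi x tau.
have gv pi k : vals (g (y pi k)) by right; exists (y pi k).
have before0 tau : [set k | (k <= tau)%N] !=set0 by exists 0%N.
have le_before pi tau := le_inf_image finite_vals (gv pi) (before0 tau).
have valv pi tau : vals (Num.min (ltilde f l g (y pi tau))
    (inf [set g (y pi k) | k in [set k | (k <= tau)%N]])).
  apply: min_in; first by apply: min_in; [left; exists (y pi tau) | exact: VA_in].
  exact: inf_image_in finite_vals (gv pi) (before0 tau).
have supv pi := sup_image_in finite_vals (valv pi) times0.
rewrite /VRA_tilde (le_sup_image finite_vals supv policies0); split.
  move=> [pi _ /(le_sup_image finite_vals (valv pi) times0)[tau _]].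
  rewrite /ltilde !le_min -andbA => /and3P[ly /le_VA sy /le_before gk].
  exact: (reach_avoid_cat ly sy).
move=> rax; have [pi [d piP]] := reach_policy f l g c u0.
have [tau [ly reach]] := reach_policy_reaches piP rax.
exists pi => //; apply/(le_sup_image finite_vals (valv pi) times0); exists tau => //.
rewrite /ltilde !le_min ly /=; apply/andP; split.
  exact/le_VA/reach_avoid_safe/reach.
by apply/le_before => k le_kt; exact/safe_le_g/reach_avoid_safe/reach.
Qed.

Lemma le_V_aug c x : c <= V_aug f l g x <-> reach_avoid f l g c x.
Proof.
rewrite -[V_aug f l g x]/(sup (range (fun bpi => ra_value (aug_xi f bpi x)))).
rewrite (le_sup_image finite_vals (fun bpi => ra_value_in _) aug_policies0); split.
  move=> [bpi _ /le_ra_value[[n ln] gk]]; exists n, (aug_input f bpi x).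
  by rewrite -aug_xi_open_loop; split=> // k; rewrite -aug_xi_open_loop.
move=> rax; have [pis pisP] := safe_policy f g c u0.
have [pir [d pirP]] := reach_policy f l g c u0.
exists (switch_policy c pis pir) => //.
exact/le_ra_value/(switch_reach_avoid pisP pirP rax).
Qed.

End Values.

Theorem theorem1 (R : realType) (X U : finType)
  (hX : (0 < #|X|)%N) (hU : (0 < #|U|)%N)
  (f : X -> U -> X) (l g : X -> R) (x : X) :
  V_aug f l g x = V_openloop f l g x /\ V_openloop f l g x = VRA_tilde f l g x.
Proof.
have [u0 _] := card_gt0P hU.
split; apply: le_ext => c.
  exact: iff_trans (le_V_aug f l g u0 c x) (iff_sym (le_V_openloop f l g u0 c x)).
exact: iff_trans (le_V_openloop f l g u0 c x) (iff_sym (le_VRA_tilde f l g u0 c x)).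
Qed.
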